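(* Let $A$ be the $K\times K$ matrix with diagonal entries $\frac{2K-1}{K}$ and all off-diagonal entries $-\frac1K$. Then $A$ is invertible, so for any $\gamma_1,\ldots,\gamma_K\in\mathbb{R}$ the system $A\,(\Gamma^c_1,\ldots,\Gamma^c_K)^T=b$, with $b_j=\gamma_j+\frac1K\sum_{l=1}^{n}\Gamma_l+\frac{\Gamma_\infty}{K}$, has a unique solution. For this solution and every $N\ge1$, the function $$\Psi_N(z)=\sum_{l=1}^{n}\Gamma_l\,\psi^{s*}_N(z,z_l)+\psi^*_{N,\infty}(z)+\sum_{j=1}^{K}\psi^*_{N,j}(z)$$ has circulation exactly $\gamma_j$ around $L_j$ for each $j=1,\ldots,K$.
   Context: Let $K\ge2$, circles $L_j=\{|z-c_j|=R_j\}$ with pairwise disjoint closed disks, $D$ the exterior of all closed disks, $T_j(z)=c_j+\frac{R_j^2}{\bar z-\bar c_j}$ the inversion in $L_j$ ($T_j(c_j)=\infty$, $T_j(\infty)=c_j$). Let $z_1,\ldots,z_n$ be finite points of $D$ with real circulations $\Gamma_1,\ldots,\Gamma_n$, and let $\Gamma_\infty\in\mathbb{R}$. For a starting point $p$ (a finite point of $D$, a center $c_j$, or $\infty$), the level-$M$ points of $p$ are the multiset $T_{i_1}\circ\cdots\circ T_{i_M}(p)$ over words with $i_k\ne i_{k+1}$ (level 0 is $p$). $\psi^s_N(z,z_l)=-\frac{1}{2\pi}\sum_{M=0}^{N}(-1)^M\sum_{\zeta\in\text{level }M\text{ of }z_l}\log|z-\zeta|$, $\psi^{s*}_N=\frac{(K-1)\psi^s_N+\psi^s_{N+1}}{K}$.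 $\psi_{N,\infty}(z)=-\frac{\Gamma_\infty}{2\pi}\sum_{M=1}^{N}(-1)^M\sum_{\zeta\in\text{level }M\text{ of }\infty}\log|z-\zeta|$, $\psi^*_{N,\infty}=\frac{(K-1)\psi_{N,\infty}+\psi_{N+1,\infty}}{K}$. $\psi_{N,j}(z)=-\frac{\Gamma^c_j}{2\pi}\sum_{M=0}^{N}(-1)^M\sum_{\zeta\in\text{level }M\text{ of }c_j,\ \zeta\ne\infty}\log|z-\zeta|$, $\psi^*_{N,j}=\frac{(K-1)\psi_{N,j}+\psi_{N+1,j}}{K}$. Circulation: for a finite sum $\psi(z)=-\frac{1}{2\pi}\sum_k\Gamma_k\log|z-\zeta_k|$ with no $\zeta_k$ on $L_j$, the circulation around $L_j$ is the sum of $\Gamma_k$ over $\zeta_k$ in the open disk bounded by $L_j$ (equivalently $-\oint_{L_j}\partial\psi/\partial n\,ds$, counterclockwise, outward normal). *)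

From Stdlib Require Import Reals Lra List Arith.
Import ListNotations.
Open Scope R_scope.

(* Points of the plane as pairs of reals; extended points: None = infinity. *)
Definition Point := (R * R)%type.
Definition XPoint := option Point.

Definition pdist (p q : Point) : R :=
  sqrt ((fst p - fst q)^2 + (snd p - snd q)^2).

Definition Peq_dec (p q : Point) : {p = q} + {p <> q}.
Proof.
  destruct p as [a b], q as [c d].
  destruct (Req_EM_T a c) as [->|H1].
  - destruct (Req_EM_T b d) as [->|H2]; [left; reflexivity|right; congruence].
  - right; congruence.
Defined.

Definition sumR (n : nat) (f : nat -> R) : R :=
  fold_right Rplus 0 (map f (seq 0 n)).

(* Inversion in the circle |z - c| = r :
   T(z) = c + r^2/(conj(z - c)) = c + r^2 (z - c)/|z - c|^2,
   T(c) = infinity, T(infinity) = c. *)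
Definition inversion (c : Point) (r : R) (p : XPoint) : XPoint :=
  match p with
  | None => Some c
  | Some z =>
      if Peq_dec z c then None
      else let dx := fst z - fst c in
           let dy := snd z - snd c in
           let d2 := dx^2 + dy^2 in
           Some (fst c + r^2 * dx / d2, snd c + r^2 * dy / d2)
  end.

(* Words (i_1,...,i_M) over {0..K-1} with i_k <> i_{k+1}; the head of the
   list is the outermost index i_1. *)
Fixpoint words (K M : nat) : list (list nat) :=
  match M with
  | O => [[]]
  | S M' =>
      flat_map (fun w =>
        map (fun i => i :: w)
          (filter (fun i => match w with
                            | [] => true
                            | i0 :: _ => negb (Nat.eqb i i0)
                            end) (seq 0 K)))
        (words K M')
  end.

Fixpoint apply_word (c : nat -> Point) (Rad : nat -> R) (w : list nat) (p : XPoint)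
  : XPoint :=
  match w with
  | [] => p
  | i :: w' => inversion (c i) (Rad i) (apply_word c Rad w' p)
  end.

Definition level (K : nat) (c : nat -> Point) (Rad : nat -> R) (p : XPoint) (M : nat)
  : list XPoint :=
  map (fun w => apply_word c Rad w p) (words K M).

(* A log-potential expression: a finite list of (weight Gamma_k, point zeta_k),
   representing psi(z) = -1/(2 pi) sum_k Gamma_k log|z - zeta_k|. *)
Definition LogExpr := list (R * Point).

Definition eval_expr (e : LogExpr) (z : Point) : R :=
  - / (2 * PI) * fold_right Rplus 0 (map (fun gp => fst gp * ln (pdist z (snd gp))) e).

Definition scale_expr (a : R) (e : LogExpr) : LogExpr :=
  map (fun gp => (a * fst gp, snd gp)) e.

Definition finite_pts (g : R) (l : list XPoint) : LogExpr :=
  flat_map (fun p => match p with Some q => [(g, q)] | None => [] end) l.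

Definition alt_levels (K : nat) (c : nat -> Point) (Rad : nat -> R) (p : XPoint)
  (m0 N : nat) : LogExpr :=
  flat_map (fun M => finite_pts ((-1) ^ M) (level K c Rad p M)) (seq m0 (S N - m0)).

Definition psi_s K c Rad (zl : Point) (N : nat) : LogExpr :=
  alt_levels K c Rad (Some zl) 0 N.
Definition psi_inf K c Rad (Ginf : R) (N : nat) : LogExpr :=
  scale_expr Ginf (alt_levels K c Rad None 1 N).
Definition psi_c K c Rad (Gcj : R) (j N : nat) : LogExpr :=
  scale_expr Gcj (alt_levels K c Rad (Some (c j)) 0 N).

Definition star (K : nat) (f : nat -> LogExpr) (N : nat) : LogExpr :=
  scale_expr ((INR K - 1) / INR K) (f N) ++ scale_expr (1 / INR K) (f (S N)).

Definition PsiN (K : nat) (c : nat -> Point) (Rad : nat -> R) (n : nat)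
  (z : nat -> Point) (Gam : nat -> R) (Ginf : R) (Gc : nat -> R) (N : nat) : LogExpr :=
  flat_map (fun l => scale_expr (Gam l) (star K (psi_s K c Rad (z l)) N)) (seq 0 n)
  ++ star K (psi_inf K c Rad Ginf) N
  ++ flat_map (fun j => star K (psi_c K c Rad (Gc j) j) N) (seq 0 K).

Definition avoids_circle (e : LogExpr) (cj : Point) (rj : R) : Prop :=
  forall gp, In gp e -> pdist (snd gp) cj <> rj.

(* Circulation around L_j: sum of the weights of points in the open disk. *)
Definition circulation (e : LogExpr) (cj : Point) (rj : R) : R :=
  fold_right Rplus 0
    (map (fun gp => if Rlt_dec (pdist (snd gp) cj) rj then fst gp else 0) e).

Definition Amat (K : nat) (j k : nat) : R :=
  if Nat.eqb j k then (2 * INR K - 1) / INR K else - (1 / INR K).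

Definition rhs (K n : nat) (gamma Gam : nat -> R) (Ginf : R) (j : nat) : R :=
  gamma j + (1 / INR K) * sumR n Gam + Ginf / INR K.

Definition solves (K n : nat) (gamma Gam : nat -> R) (Ginf : R) (Gc : nat -> R) : Prop :=
  forall j, (j < K)%nat -> sumR K (fun k => Amat K j k * Gc k) = rhs K n gamma Gam Ginf j.

Definition kron (j k : nat) : R := if Nat.eqb j k then 1 else 0.

From Stdlib Require Import Reals Rgeom List Lra Lia.
Import ListNotations.
Open Scope R_scope.

(* An inversion T_i maps everything outside the disk of L_i into it, and a reduced
   word never applies T_i twice in a row, so every level-(M+1) point of infinity, of an
   exterior point or of a center lies in the disk of the outermost inversion of its
   word (the single exception T_j(c_j) = infinity contributes no point).  Counting
   reduced words by their first letter, L_j encloses (K-1)^M level-(M+1) points, and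
   the circulation of each alternating sum around L_j is T_N + 2 [source inside L_j]
   with T_N = sum_(M<N) (-1)^(M+1) (K-1)^M.  The starred average turns T_N into the
   constant -1/K, so the circulation of Psi_N around L_j is
   (A Gc)_j - (sum_l Gam_l + Ginf)/K, which equals gamma_j exactly when Gc solves
   the system. *)

Lemma pdist_dist_euc p q : pdist p q = dist_euc (fst p) (snd p) (fst q) (snd q).
Proof. unfold pdist, dist_euc. rewrite !Rsqr_pow2. reflexivity. Qed.

Lemma pdist_self p : pdist p p = 0.
Proof. rewrite pdist_dist_euc. apply distance_refl. Qed.

Lemma pdist_sym p q : pdist p q = pdist q p.
Proof. rewrite !pdist_dist_euc. apply distance_symm. Qed.

Lemma pdist_triangle a m b : pdist a b <= pdist a m + pdist m b.
Proof. rewrite !pdist_dist_euc. apply triangle. Qed.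

Lemma inversion_exterior_into_disk cj r x : 0 < r -> r < pdist x cj ->
  exists y, inversion cj r (Some x) = Some y /\ pdist y cj < r.
Proof.
  intros Hr Hx. unfold inversion.
  destruct (Peq_dec x cj) as [->|Hne]; [rewrite pdist_self in Hx; lra|].
  eexists; split; [reflexivity|]. cbv zeta.
  set (D := pdist x cj) in Hx.
  assert (HD2 : (fst x - fst cj)^2 + (snd x - snd cj)^2 = D^2).
  { unfold D, pdist. rewrite pow2_sqrt; [reflexivity|]. apply Rplus_le_le_0_compat; apply pow2_ge_0. }
  (* |T(x) - c| = r^2 / |x - c| *)
  replace (pdist _ cj) with (r^2 / D).
  - apply (Rmult_lt_reg_r D); [lra|]. unfold Rdiv. rewrite Rmult_assoc, Rinv_l by lra. nra.
  - unfold pdist; cbn [fst snd]. rewrite HD2, <- (sqrt_pow2 (r^2 / D)).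
    + f_equal. field_simplify_eq; [|lra]. rewrite <- HD2. ring.
    + apply Rle_mult_inv_pos; [apply pow2_ge_0|lra].
Qed.

Definition sumL {A} (f : A -> R) (l : list A) : R := fold_right Rplus 0 (map f l).

Lemma sumL_nil {A} (f : A -> R) : sumL f [] = 0.
Proof. reflexivity. Qed.

Lemma sumL_cons {A} (f : A -> R) x l : sumL f (x :: l) = f x + sumL f l.
Proof. reflexivity. Qed.

Lemma sumL_app {A} (f : A -> R) l1 l2 : sumL f (l1 ++ l2) = sumL f l1 + sumL f l2.
Proof. unfold sumL. induction l1 as [|x l1 IH]; cbn; [ring|]. rewrite IH; ring. Qed.

Lemma sumL_map {A B} (f : B -> R) (g : A -> B) l :
  sumL f (map g l) = sumL (fun x => f (g x)) l.
Proof. unfold sumL. rewrite map_map. reflexivity. Qed.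

Lemma sumL_flat_map {A B} (f : B -> R) (g : A -> list B) l :
  sumL f (flat_map g l) = sumL (fun x => sumL f (g x)) l.
Proof. induction l as [|x l IH]; [reflexivity|]. cbn [flat_map]. rewrite sumL_app, IH. reflexivity. Qed.

Lemma sumL_ext_in {A} (f g : A -> R) l :
  (forall x, In x l -> f x = g x) -> sumL f l = sumL g l.
Proof.
  induction l as [|x l IH]; intros H; [reflexivity|]. rewrite !sumL_cons.
  f_equal; [apply H; left; reflexivity|apply IH; intros; apply H; right; assumption].
Qed.

Lemma sumL_plus {A} (f g : A -> R) l : sumL (fun x => f x + g x) l = sumL f l + sumL g l.
Proof. induction l as [|x l IH]; [cbn; ring|]. rewrite !sumL_cons, IH. ring. Qed.

Lemma sumL_minus {A} (f g : A -> R) l : sumL (fun x => f x - g x) l = sumL f l - sumL g l.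
Proof. induction l as [|x l IH]; [cbn; ring|]. rewrite !sumL_cons, IH. ring. Qed.

Lemma sumL_scal {A} (a : R) (f : A -> R) l : sumL (fun x => a * f x) l = a * sumL f l.
Proof. induction l as [|x l IH]; [cbn; ring|]. rewrite !sumL_cons, IH. ring. Qed.

Lemma sumL_const {A} (a : R) (l : list A) : sumL (fun _ => a) l = INR (length l) * a.
Proof. induction l as [|x l IH]; [cbn; ring|]. rewrite sumL_cons, IH, length_cons, S_INR. ring. Qed.

Lemma sumL_filter {A} (f : A -> R) (P : A -> bool) l :
  sumL f (filter P l) = sumL (fun x => if P x then f x else 0) l.
Proof.
  induction l as [|x l IH]; [reflexivity|]. cbn [filter]. rewrite sumL_cons.
  destruct (P x); rewrite ?sumL_cons, IH; ring.
Qed.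

Lemma sumR_sumL K f : sumR K f = sumL f (seq 0 K).
Proof. reflexivity. Qed.

Lemma sumL_kron_notin (f : nat -> R) j l : ~ In j l -> sumL (fun i => kron i j * f i) l = 0.
Proof.
  intros Hj. rewrite (sumL_ext_in _ (fun _ => 0)), sumL_const; [ring|].
  intros i Hi. unfold kron. destruct (Nat.eqb_spec i j) as [->|]; [contradiction|ring].
Qed.

Lemma sumL_kron (f : nat -> R) j n : (j < n)%nat -> sumL (fun i => kron i j * f i) (seq 0 n) = f j.
Proof.
  induction n as [|n IH]; intros Hj; [lia|].
  rewrite seq_S, sumL_app, sumL_cons, sumL_nil. cbn [Nat.add]. unfold kron at 2.
  destruct (Nat.eqb_spec n j) as [->|Hne].
  - rewrite sumL_kron_notin by (rewrite in_seq; lia). ring.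
  - rewrite IH by lia. ring.
Qed.

Lemma sumL_kron_r (f : nat -> R) j n : (j < n)%nat -> sumL (fun i => kron j i * f i) (seq 0 n) = f j.
Proof.
  intros Hj. rewrite <- (sumL_kron f j n Hj). apply sumL_ext_in. intros i _.
  unfold kron. rewrite Nat.eqb_sym. reflexivity.
Qed.

Lemma sumL_seq_except (g : nat -> R) h n : (h < n)%nat ->
  sumL (fun i => if negb (Nat.eqb i h) then g i else 0) (seq 0 n) = sumL g (seq 0 n) - g h.
Proof.
  intros Hh. rewrite <- (sumL_kron g h n Hh), <- sumL_minus. apply sumL_ext_in. intros i _.
  unfold kron. destruct (Nat.eqb i h); cbn; ring.
Qed.

Definition can_prepend (i : nat) (w : list nat) : bool :=
  match w with [] => true | i0 :: _ => negb (Nat.eqb i i0) end.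

Definition head_is (j : nat) (w : list nat) : R :=
  match w with i :: _ => kron i j | [] => 0 end.

Lemma in_words_S K M w : In w (words K (S M)) ->
  exists i w', w = i :: w' /\ (i < K)%nat /\ In w' (words K M) /\ can_prepend i w' = true.
Proof.
  cbn [words]. intros Hw. apply in_flat_map in Hw as [w' [Hw' Hin]].
  apply in_map_iff in Hin as [i [<- Hi]]. apply filter_In in Hi as [Hi Hp].
  apply in_seq in Hi. exists i, w'. repeat split; [lia|assumption|assumption].
Qed.

Lemma length_words K M w : In w (words K M) -> length w = M.
Proof.
  revert w; induction M as [|M IH]; intros w Hw.
  - destruct Hw as [<-|[]]. reflexivity.
  - destruct (in_words_S _ _ _ Hw) as [i [w' [-> [_ [Hw' _]]]]]. cbn. rewrite (IH w' Hw'). reflexivity.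
Qed.

Lemma sumL_words_S K M (f : list nat -> R) : sumL f (words K (S M)) =
  sumL (fun w => sumL (fun i => if can_prepend i w then f (i :: w) else 0) (seq 0 K)) (words K M).
Proof.
  cbn [words]. rewrite sumL_flat_map. apply sumL_ext_in. intros w _.
  rewrite sumL_map, sumL_filter. reflexivity.
Qed.

Lemma words_count K M : sumL (fun _ => 1) (words K (S M)) = INR K * (INR K - 1)^M.
Proof.
  induction M as [|M IH].
  - rewrite sumL_words_S. cbn [words]. rewrite sumL_cons, sumL_nil. cbn [can_prepend].
    rewrite sumL_const, length_seq. ring.
  - rewrite sumL_words_S, (sumL_ext_in _ (fun _ => (INR K - 1) * 1)), sumL_scal, IH.
    + cbn. ring.
    + intros w Hw. destruct (in_words_S _ _ _ Hw) as [h [w' [-> [Hh _]]]].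
      cbn [can_prepend]. rewrite sumL_seq_except, sumL_const, length_seq by exact Hh. ring.
Qed.

Lemma words_head_count K M j : (j < K)%nat ->
  sumL (head_is j) (words K (S M)) = (INR K - 1)^M.
Proof.
  intros Hj. induction M as [|M IH].
  - rewrite sumL_words_S. cbn [words]. rewrite sumL_cons, sumL_nil. cbn [can_prepend head_is].
    rewrite (sumL_ext_in _ (fun i => kron i j * 1)), sumL_kron by (assumption || (intros; ring)).
    ring.
  - rewrite sumL_words_S, (sumL_ext_in _ (fun w => 1 - head_is j w)), sumL_minus, IH, words_count.
    + cbn. ring.
    + intros w Hw. destruct (in_words_S _ _ _ Hw) as [h [w' [-> [Hh _]]]].
      cbn [can_prepend head_is]. rewrite (sumL_seq_except (fun i => kron i j)) by exact Hh.
      rewrite (sumL_ext_in _ (fun i => kron i j * 1)), sumL_kron by (assumption || (intros; ring)).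
      ring.
Qed.

Lemma Amat_apply K j g : (1 <= K)%nat -> (j < K)%nat ->
  sumR K (fun m => Amat K j m * g m) = 2 * g j - 1 / INR K * sumR K g.
Proof.
  intros HK Hj. assert (HKpos : 0 < INR K) by (apply lt_0_INR; lia).
  rewrite !sumR_sumL, <- (sumL_kron_r g j K Hj), <- !sumL_scal, <- sumL_minus.
  apply sumL_ext_in. intros m _. unfold Amat, kron. destruct (Nat.eqb j m); field; lra.
Qed.

Lemma Amat_sym K j k : Amat K j k = Amat K k j.
Proof. unfold Amat. rewrite Nat.eqb_sym. reflexivity. Qed.

(* A = 2 I - J/K with J the all-ones matrix; J^2 = K J gives A^-1 = (I + J/K)/2. *)
Definition Asol (K : nat) (b : nat -> R) (j : nat) : R := (b j + sumR K b / INR K) / 2.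

Definition Ainv (K : nat) (j k : nat) : R := (kron j k + 1 / INR K) / 2.

Lemma sumR_Asol K b : (1 <= K)%nat -> sumR K (Asol K b) = sumR K b.
Proof.
  intros HK. assert (HKpos : 0 < INR K) by (apply lt_0_INR; lia).
  unfold Asol. set (S := sumR K b). rewrite sumR_sumL.
  rewrite (sumL_ext_in _ (fun j => / 2 * b j + S / (2 * INR K))), sumL_plus, sumL_scal,
    sumL_const, length_seq by (intros; field; lra).
  rewrite <- sumR_sumL. fold S. field. lra.
Qed.

Lemma Amat_Asol K b j : (1 <= K)%nat -> (j < K)%nat ->
  sumR K (fun m => Amat K j m * Asol K b m) = b j.
Proof.
  intros HK Hj. assert (HKpos : 0 < INR K) by (apply lt_0_INR; lia).
  rewrite Amat_apply, sumR_Asol by assumption. unfold Asol. field. lra.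
Qed.

Lemma Amat_solution_unique K b g : (1 <= K)%nat ->
  (forall j, (j < K)%nat -> sumR K (fun m => Amat K j m * g m) = b j) ->
  forall j, (j < K)%nat -> g j = Asol K b j.
Proof.
  intros HK Hg j Hj. assert (HKpos : 0 < INR K) by (apply lt_0_INR; lia).
  assert (Hsum : sumR K b = sumR K g).
  { rewrite !sumR_sumL, (sumL_ext_in b (fun i => 2 * g i - 1 / INR K * sumR K g)).
    - rewrite sumL_minus, !sumL_scal, sumL_const, length_seq, <- sumR_sumL. field. lra.
    - intros i Hi. apply in_seq in Hi. rewrite <- Amat_apply by (assumption || lia).
      symmetry. apply Hg. lia. }
  pose proof (Hg j Hj) as Hgj. rewrite Amat_apply in Hgj by assumption.
  unfold Asol. rewrite Hsum, <- Hgj. field. lra.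
Qed.

Lemma Asol_kron K k : (1 <= K)%nat -> (k < K)%nat ->
  forall m, Asol K (fun i => kron i k) m = Ainv K m k.
Proof.
  intros HK Hk m. unfold Asol, Ainv. rewrite sumR_sumL.
  rewrite (sumL_ext_in _ (fun i => kron i k * 1)), sumL_kron by (assumption || (intros; ring)).
  reflexivity.
Qed.

Lemma Amat_Ainv K j k : (1 <= K)%nat -> (j < K)%nat -> (k < K)%nat ->
  sumR K (fun m => Amat K j m * Ainv K m k) = kron j k.
Proof.
  intros HK Hj Hk. rewrite sumR_sumL, (sumL_ext_in _ (fun m => Amat K j m * Asol K (fun i => kron i k) m)).
  - rewrite <- sumR_sumL. exact (Amat_Asol K _ j HK Hj).
  - intros m _. rewrite Asol_kron by assumption. reflexivity.
Qed.

Lemma Ainv_Amat K j k : (1 <= K)%nat -> (j < K)%nat -> (k < K)%nat ->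
  sumR K (fun m => Ainv K j m * Amat K m k) = kron j k.
Proof.
  intros HK Hj Hk. unfold kron. rewrite Nat.eqb_sym. fold (kron k j).
  rewrite <- (Amat_Ainv K k j HK Hk Hj), !sumR_sumL. apply sumL_ext_in. intros m _.
  unfold Ainv, kron. rewrite Amat_sym, Nat.eqb_sym. ring.
Qed.

Definition disk_count (cj : Point) (rj : R) (p : XPoint) : R :=
  match p with Some q => if Rlt_dec (pdist q cj) rj then 1 else 0 | None => 0 end.

Lemma circulation_app e1 e2 cj rj :
  circulation (e1 ++ e2) cj rj = circulation e1 cj rj + circulation e2 cj rj.
Proof. exact (sumL_app _ e1 e2). Qed.

Lemma circulation_scale a e cj rj :
  circulation (scale_expr a e) cj rj = a * circulation e cj rj.
Proof.
  unfold circulation, scale_expr. fold (sumL (fun gp => if Rlt_dec (pdist (snd gp) cj) rj then fst gp else 0) e).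
  rewrite map_map, <- sumL_scal. apply sumL_ext_in. intros gp _. cbn. destruct (Rlt_dec _ _); ring.
Qed.

Lemma circulation_flat_map {A} (f : A -> LogExpr) l cj rj :
  circulation (flat_map f l) cj rj = sumL (fun x => circulation (f x) cj rj) l.
Proof. exact (sumL_flat_map _ f l). Qed.

Lemma circulation_star K f N cj rj : circulation (star K f N) cj rj =
  (INR K - 1) / INR K * circulation (f N) cj rj + 1 / INR K * circulation (f (S N)) cj rj.
Proof. unfold star. rewrite circulation_app, !circulation_scale. reflexivity. Qed.

Lemma circulation_finite_pts g l cj rj :
  circulation (finite_pts g l) cj rj = g * sumL (disk_count cj rj) l.
Proof.
  unfold finite_pts. induction l as [|[q|] l IH]; cbn [flat_map app]; [cbn; ring| |].
  - unfold circulation in *. cbn [map fold_right fst snd]. rewrite IH, sumL_cons. cbn [disk_count].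
    destruct (Rlt_dec _ _); ring.
  - rewrite IH, sumL_cons. cbn. ring.
Qed.

Lemma circulation_alt_levels K c Rad p m0 N cj rj :
  circulation (alt_levels K c Rad p m0 N) cj rj =
  sumL (fun M => (-1)^M * sumL (disk_count cj rj) (level K c Rad p M)) (seq m0 (S N - m0)).
Proof.
  unfold alt_levels. rewrite circulation_flat_map. apply sumL_ext_in. intros M _.
  apply circulation_finite_pts.
Qed.

Lemma avoids_circle_app e1 e2 cj rj : avoids_circle e1 cj rj -> avoids_circle e2 cj rj ->
  avoids_circle (e1 ++ e2) cj rj.
Proof. intros H1 H2 gp Hin. apply in_app_or in Hin as [H|H]; auto. Qed.

Lemma avoids_circle_scale a e cj rj : avoids_circle e cj rj -> avoids_circle (scale_expr a e) cj rj.
Proof. intros H gp Hin. apply in_map_iff in Hin as [x [<- Hx]]. exact (H x Hx). Qed.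

Lemma avoids_circle_flat_map {A} (f : A -> LogExpr) l cj rj :
  (forall x, In x l -> avoids_circle (f x) cj rj) -> avoids_circle (flat_map f l) cj rj.
Proof. intros H gp Hin. apply in_flat_map in Hin as [x [Hx Hg]]. exact (H x Hx gp Hg). Qed.

Lemma avoids_circle_star K f N cj rj : avoids_circle (f N) cj rj -> avoids_circle (f (S N)) cj rj ->
  avoids_circle (star K f N) cj rj.
Proof. intros. apply avoids_circle_app; apply avoids_circle_scale; assumption. Qed.

Lemma avoids_circle_alt_levels K c Rad p m0 N cj rj :
  (forall M q, In (Some q) (level K c Rad p M) -> pdist q cj <> rj) ->
  avoids_circle (alt_levels K c Rad p m0 N) cj rj.
Proof.
  intros H. apply avoids_circle_flat_map. intros M _ gp Hin.
  apply in_flat_map in Hin as [[q|] [Hq Hg]]; [|destruct Hg].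
  destruct Hg as [<-|[]]. exact (H M q Hq).
Qed.

Definition alt_geom (K N : nat) : R := sumL (fun M => (-1)^(S M) * (INR K - 1)^M) (seq 0 N).

Lemma alt_geom_S K N : alt_geom K (S N) = - 1 + sumL (fun M => (-1)^(S (S M)) * (INR K - 1)^(S M)) (seq 0 N).
Proof. unfold alt_geom. cbn [seq]. rewrite <- seq_shift, sumL_cons, sumL_map. cbn [pow]. ring. Qed.

Lemma alt_geom_closed K N : INR K * alt_geom K N = (-1)^N * (INR K - 1)^N - 1.
Proof.
  induction N as [|N IH]; [cbn; ring|].
  unfold alt_geom in *. rewrite seq_S, sumL_app, sumL_cons, sumL_nil, Rmult_plus_distr_l, IH. cbn. ring.
Qed.

(* The starred average cancels the oscillating term (-(K-1))^N of [alt_geom]. *)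
Lemma alt_geom_star K N : (INR K - 1) * alt_geom K N + alt_geom K (S N) = -1.
Proof.
  transitivity (INR K * alt_geom K N - (-1)^N * (INR K - 1)^N).
  - unfold alt_geom. rewrite seq_S, sumL_app, sumL_cons, sumL_nil. cbn [Nat.add pow]. ring.
  - rewrite alt_geom_closed. ring.
Qed.

Lemma circulation_star_alt_geom K f N cj rj a x : (1 <= K)%nat ->
  circulation (f N) cj rj = a * (x + alt_geom K N) ->
  circulation (f (S N)) cj rj = a * (x + alt_geom K (S N)) ->
  circulation (star K f N) cj rj = a * (x - 1 / INR K).
Proof.
  intros HK HN HSN. assert (HKpos : 0 < INR K) by (apply lt_0_INR; lia).
  rewrite circulation_star, HN, HSN.
  transitivity (a * x + a / INR K * ((INR K - 1) * alt_geom K N + alt_geom K (S N))).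
  - field. lra.
  - rewrite alt_geom_star. field. lra.
Qed.

Section Circles.

Variables (K : nat) (c : nat -> Point) (Rad : nat -> R).
Hypothesis Rad_pos : forall j, (j < K)%nat -> 0 < Rad j.
Hypothesis disks_disjoint : forall i j, (i < K)%nat -> (j < K)%nat -> i <> j ->
  Rad i + Rad j < pdist (c i) (c j).

Lemma disk_exterior_other i j q : (i < K)%nat -> (j < K)%nat -> i <> j ->
  pdist q (c i) < Rad i -> Rad j < pdist q (c j).
Proof.
  intros Hi Hj Hij Hq. pose proof (disks_disjoint i j Hi Hj Hij).
  pose proof (pdist_triangle (c i) q (c j)). rewrite (pdist_sym (c i) q) in *. lra.
Qed.

Lemma disk_off_circle i j q : (i < K)%nat -> (j < K)%nat ->
  pdist q (c i) < Rad i -> pdist q (c j) <> Rad j.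
Proof.
  intros Hi Hj Hq. destruct (Nat.eq_dec i j) as [<-|Hij]; [lra|].
  pose proof (disk_exterior_other i j q Hi Hj Hij Hq). lra.
Qed.

Lemma disk_count_disk i j q : (i < K)%nat -> (j < K)%nat ->
  pdist q (c i) < Rad i -> disk_count (c j) (Rad j) (Some q) = kron i j.
Proof.
  intros Hi Hj Hq. cbn [disk_count]. unfold kron. destruct (Nat.eqb_spec i j) as [<-|Hij].
  - destruct (Rlt_dec _ _); [reflexivity|contradiction].
  - pose proof (disk_exterior_other i j q Hi Hj Hij Hq). destruct (Rlt_dec _ _); [lra|reflexivity].
Qed.

Lemma center_in_disk k : (k < K)%nat -> pdist (c k) (c k) < Rad k.
Proof. intros Hk. rewrite pdist_self. exact (Rad_pos k Hk). Qed.

(* The sources of the reflection scheme: infinity, points exterior to all disks, and centers. *)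
Definition admissible (p : XPoint) : Prop :=
  forall x i, p = Some x -> (i < K)%nat -> x = c i \/ Rad i < pdist x (c i).

Lemma admissible_infinity : admissible None.
Proof. intros x i E. discriminate E. Qed.

Lemma admissible_exterior x : (forall i, (i < K)%nat -> Rad i < pdist x (c i)) -> admissible (Some x).
Proof. intros Hx y i [= <-] Hi. right. exact (Hx i Hi). Qed.

Lemma admissible_center k : (k < K)%nat -> admissible (Some (c k)).
Proof.
  intros Hk x i [= <-] Hi. destruct (Nat.eq_dec k i) as [<-|Hki]; [left; reflexivity|right].
  pose proof (disks_disjoint k i Hk Hi Hki). pose proof (Rad_pos k Hk). lra.
Qed.

Lemma inversion_into_disk i p : (i < K)%nat ->
  (forall x, p = Some x -> Rad i < pdist x (c i)) ->
  exists y, inversion (c i) (Rad i) p = Some y /\ pdist y (c i) < Rad i.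
Proof.
  intros Hi Hp. destruct p as [x|].
  - exact (inversion_exterior_into_disk (c i) (Rad i) x (Rad_pos i Hi) (Hp x eq_refl)).
  - exists (c i). split; [reflexivity|exact (center_in_disk i Hi)].
Qed.

Lemma inversion_admissible i p : (i < K)%nat -> admissible p ->
  match inversion (c i) (Rad i) p with
  | Some q => pdist q (c i) < Rad i
  | None => p = Some (c i)
  end.
Proof.
  intros Hi Hp. destruct p as [x|]; [destruct (Hp x i eq_refl Hi) as [->|Hx]|].
  - cbn. destruct (Peq_dec (c i) (c i)); [reflexivity|contradiction].
  - destruct (inversion_exterior_into_disk (c i) (Rad i) x (Rad_pos i Hi) Hx) as [y [-> Hy]].
    exact Hy.
  - exact (center_in_disk i Hi).
Qed.

(* A reduced word never applies T_i to a point of the disk bounded by L_i, so every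
   image lies in the disk of its outermost inversion; the only image at infinity is
   T_i(c_i). *)
Lemma apply_word_head_disk p : admissible p -> forall M w, In w (words K (S M)) ->
  exists i w', w = i :: w' /\ (i < K)%nat /\
    match apply_word c Rad w p with
    | Some q => pdist q (c i) < Rad i
    | None => w' = [] /\ p = Some (c i)
    end.
Proof.
  intros Hp M. induction M as [|M IH]; intros w Hw;
    destruct (in_words_S _ _ _ Hw) as [i [w' [-> [Hi [Hw' Hext]]]]]; exists i, w'.
  - destruct Hw' as [<-|[]]. repeat split; [exact Hi|].
    pose proof (inversion_admissible i p Hi Hp) as Hinv. cbn [apply_word].
    destruct (inversion _ _ p); auto.
  - repeat split; [exact Hi|]. cbn [apply_word].
    destruct (IH w' Hw') as [h [w'' [-> [Hh Hq]]]].
    cbn [can_prepend] in Hext. apply Bool.negb_true_iff, Nat.eqb_neq in Hext.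
    destruct (inversion_into_disk i (apply_word c Rad (h :: w'') p)) as [y [-> Hy]];
      [exact Hi| |exact Hy].
    intros q Eq. rewrite Eq in Hq. exact (disk_exterior_other h i q Hh Hi (not_eq_sym Hext) Hq).
Qed.

Lemma disk_count_inversion_self j p : (j < K)%nat -> admissible p ->
  disk_count (c j) (Rad j) (inversion (c j) (Rad j) p) = 1 - disk_count (c j) (Rad j) p.
Proof.
  intros Hj Hp. destruct p as [x|]; [destruct (Hp x j eq_refl Hj) as [->|Hx]|].
  - cbn [inversion]. destruct (Peq_dec (c j) (c j)); [|contradiction].
    rewrite (disk_count_disk j j (c j) Hj Hj (center_in_disk j Hj)). unfold kron.
    rewrite Nat.eqb_refl. cbn. ring.
  - destruct (inversion_exterior_into_disk (c j) (Rad j) x (Rad_pos j Hj) Hx) as [y [-> Hy]].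
    rewrite (disk_count_disk j j y Hj Hj Hy). unfold kron. rewrite Nat.eqb_refl.
    cbn. destruct (Rlt_dec _ _); [lra|ring].
  - cbn [inversion]. rewrite (disk_count_disk j j (c j) Hj Hj (center_in_disk j Hj)).
    unfold kron. rewrite Nat.eqb_refl. cbn. ring.
Qed.

Lemma disk_count_inversion_other i j p : (i < K)%nat -> (j < K)%nat -> i <> j -> admissible p ->
  disk_count (c j) (Rad j) (inversion (c i) (Rad i) p) = 0.
Proof.
  intros Hi Hj Hij Hp. pose proof (inversion_admissible i p Hi Hp) as Hinv.
  destruct (inversion (c i) (Rad i) p) as [q|]; [|reflexivity].
  rewrite (disk_count_disk i j q Hi Hj Hinv). unfold kron.
  destruct (Nat.eqb_spec i j); [contradiction|reflexivity].
Qed.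

Definition level_count (p : XPoint) (M j : nat) : R :=
  sumL (disk_count (c j) (Rad j)) (level K c Rad p M).

Lemma level_count_0 p j : level_count p 0 j = disk_count (c j) (Rad j) p.
Proof. unfold level_count, level. cbn. ring. Qed.

Lemma level_count_1 p j : (j < K)%nat -> admissible p ->
  level_count p 1 j = 1 - disk_count (c j) (Rad j) p.
Proof.
  intros Hj Hp. unfold level_count, level.
  rewrite sumL_map, sumL_words_S. cbn [words]. rewrite sumL_cons, sumL_nil, Rplus_0_r.
  cbn [can_prepend apply_word].
  rewrite (sumL_ext_in _ (fun i => kron i j * (1 - disk_count (c j) (Rad j) p))).
  - exact (sumL_kron _ j K Hj).
  - intros i Hi. apply in_seq in Hi. unfold kron. destruct (Nat.eqb_spec i j) as [->|Hij].
    + rewrite disk_count_inversion_self by assumption. ring.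
    + rewrite disk_count_inversion_other by (assumption || lia). ring.
Qed.

Lemma level_count_SS p M j : (j < K)%nat -> admissible p ->
  level_count p (S (S M)) j = (INR K - 1)^(S M).
Proof.
  intros Hj Hp. unfold level_count, level. rewrite sumL_map, <- (words_head_count K (S M) j Hj).
  apply sumL_ext_in. intros w Hw.
  destruct (apply_word_head_disk p Hp (S M) w Hw) as [i [w' [-> [Hi Hq]]]].
  destruct (apply_word c Rad (i :: w') p) as [q|].
  - exact (disk_count_disk i j q Hi Hj Hq).
  - destruct Hq as [-> _]. apply length_words in Hw. discriminate.
Qed.

Lemma level_point_off_circle p j M q : (j < K)%nat -> admissible p ->
  (forall x, p = Some x -> pdist x (c j) <> Rad j) ->
  In (Some q) (level K c Rad p M) -> pdist q (c j) <> Rad j.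
Proof.
  intros Hj Hp Hp0 Hq. unfold level in Hq. apply in_map_iff in Hq as [w [Hwq Hw]].
  destruct M as [|M].
  - destruct Hw as [<-|[]]. exact (Hp0 q Hwq).
  - destruct (apply_word_head_disk p Hp M w Hw) as [i [w' [-> [Hi Hi']]]].
    rewrite Hwq in Hi'. exact (disk_off_circle i j q Hi Hj Hi').
Qed.

Lemma circulation_alt_levels_from1 p N j : (j < K)%nat -> admissible p -> (1 <= N)%nat ->
  circulation (alt_levels K c Rad p 1 N) (c j) (Rad j) =
  alt_geom K N + disk_count (c j) (Rad j) p.
Proof.
  intros Hj Hp HN. destruct N as [|N]; [lia|].
  rewrite circulation_alt_levels, alt_geom_S. replace (S (S N) - 1)%nat with (S N) by lia.
  cbn [seq]. rewrite <- !seq_shift, sumL_cons, sumL_map, sumL_map.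
  fold (level_count p 1 j). rewrite level_count_1 by assumption.
  rewrite (sumL_ext_in _ (fun M => (-1)^(S (S M)) * (INR K - 1)^(S M))).
  - cbn [pow]. ring.
  - intros M _. fold (level_count p (S (S M)) j). rewrite level_count_SS by assumption. reflexivity.
Qed.

Lemma circulation_alt_levels_from0 p N j : (j < K)%nat -> admissible p -> (1 <= N)%nat ->
  circulation (alt_levels K c Rad p 0 N) (c j) (Rad j) =
  alt_geom K N + 2 * disk_count (c j) (Rad j) p.
Proof.
  intros Hj Hp HN.
  assert (E : circulation (alt_levels K c Rad p 0 N) (c j) (Rad j) =
              level_count p 0 j + circulation (alt_levels K c Rad p 1 N) (c j) (Rad j)).
  { rewrite !circulation_alt_levels. replace (S N - 0)%nat with (S N) by lia.
    replace (S N - 1)%nat with N by lia. cbn [seq]. rewrite sumL_cons. cbn [pow].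
    unfold level_count. ring. }
  rewrite E, level_count_0, circulation_alt_levels_from1 by assumption. ring.
Qed.

Lemma disk_count_exterior x j : (forall i, (i < K)%nat -> Rad i < pdist x (c i)) -> (j < K)%nat ->
  disk_count (c j) (Rad j) (Some x) = 0.
Proof. intros Hx Hj. pose proof (Hx j Hj). cbn. destruct (Rlt_dec _ _); [lra|reflexivity]. Qed.

Lemma circulation_PsiN n z Gam Ginf Gc N j : (1 <= K)%nat -> (1 <= N)%nat -> (j < K)%nat ->
  (forall l i, (l < n)%nat -> (i < K)%nat -> Rad i < pdist (z l) (c i)) ->
  circulation (PsiN K c Rad n z Gam Ginf Gc N) (c j) (Rad j) =
  sumR K (fun k => Amat K j k * Gc k) - 1 / INR K * sumR n Gam - Ginf / INR K.
Proof.
  intros HK HN Hj Hz.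
  assert (Hsource : forall l, (l < n)%nat ->
    circulation (star K (psi_s K c Rad (z l)) N) (c j) (Rad j) = 1 * (0 - 1 / INR K)).
  { intros l Hl. assert (Hzl : forall i, (i < K)%nat -> Rad i < pdist (z l) (c i)) by auto.
    apply circulation_star_alt_geom; [exact HK| |]; unfold psi_s;
      rewrite circulation_alt_levels_from0, disk_count_exterior by
        (auto using admissible_exterior; lia); ring. }
  assert (Hinfinity : circulation (star K (psi_inf K c Rad Ginf) N) (c j) (Rad j) =
                      Ginf * (0 - 1 / INR K)).
  { apply circulation_star_alt_geom; [exact HK| |]; unfold psi_inf;
      rewrite circulation_scale, circulation_alt_levels_from1 by
        (exact admissible_infinity || lia || assumption); cbn; ring. }
  assert (Hcenter : forall k, (k < K)%nat ->
    circulation (star K (psi_c K c Rad (Gc k) k) N) (c j) (Rad j) = Gc k * (2 * kron k j - 1 / INR K)).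
  { intros k Hk. replace (2 * kron k j - 1 / INR K) with (2 * kron k j + 0 - 1 / INR K) by ring.
    apply circulation_star_alt_geom; [exact HK| |]; unfold psi_c;
      rewrite circulation_scale, circulation_alt_levels_from0,
        (disk_count_disk k j (c k) Hk Hj (center_in_disk k Hk)) by
        (auto using admissible_center; lia); ring. }
  unfold PsiN. rewrite !circulation_app, !circulation_flat_map, Hinfinity, (Amat_apply K j Gc) by assumption.
  rewrite (sumL_ext_in _ (fun l => - (1 / INR K) * Gam l)), sumL_scal.
  2:{ intros l Hl. apply in_seq in Hl. rewrite circulation_scale, Hsource by lia. ring. }
  rewrite (sumL_ext_in (fun k => circulation (star K (psi_c K c Rad (Gc k) k) N) (c j) (Rad j))
    (fun k => 2 * (kron j k * Gc k) - 1 / INR K * Gc k)).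
  2:{ intros k Hk. apply in_seq in Hk. rewrite Hcenter by lia. unfold kron.
      rewrite Nat.eqb_sym. ring. }
  rewrite sumL_minus, !sumL_scal, sumL_kron_r, <- !sumR_sumL by assumption. lra.
Qed.

Lemma avoids_circle_PsiN n z Gam Ginf Gc N j : (j < K)%nat ->
  (forall l i, (l < n)%nat -> (i < K)%nat -> Rad i < pdist (z l) (c i)) ->
  avoids_circle (PsiN K c Rad n z Gam Ginf Gc N) (c j) (Rad j).
Proof.
  intros Hj Hz. assert (Hlevels : forall p, admissible p ->
    (forall x, p = Some x -> pdist x (c j) <> Rad j) -> forall m0 N',
    avoids_circle (alt_levels K c Rad p m0 N') (c j) (Rad j)).
  { intros p Hp Hp0 m0 N'. apply avoids_circle_alt_levels. intros M q.
    exact (level_point_off_circle p j M q Hj Hp Hp0). }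
  unfold PsiN. apply avoids_circle_app; [|apply avoids_circle_app].
  - apply avoids_circle_flat_map. intros l Hl. apply in_seq in Hl.
    assert (Hzl : forall i, (i < K)%nat -> Rad i < pdist (z l) (c i)) by (intros; apply Hz; lia).
    assert (Hoff : forall x, Some (z l) = Some x -> pdist x (c j) <> Rad j).
    { intros x [= <-]. pose proof (Hzl j Hj). lra. }
    apply avoids_circle_scale, avoids_circle_star; apply Hlevels;
      auto using admissible_exterior.
  - apply avoids_circle_star; apply avoids_circle_scale, Hlevels;
      [exact admissible_infinity|discriminate|exact admissible_infinity|discriminate].
  - apply avoids_circle_flat_map. intros k Hk. apply in_seq in Hk.
    assert (Hoff : forall x, Some (c k) = Some x -> pdist x (c j) <> Rad j).
    { intros x [= <-]. apply (disk_off_circle k); [lia|exact Hj|apply center_in_disk; lia]. }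
    assert (Hck : admissible (Some (c k))) by (apply admissible_center; lia).
    apply avoids_circle_star; apply avoids_circle_scale, Hlevels; assumption.
Qed.

End Circles.

Theorem mainTheorem9
  (K : nat) (c : nat -> Point) (Rad : nat -> R)
  (n : nat) (z : nat -> Point) (Gam : nat -> R) (Ginf : R)
  (HK : (2 <= K)%nat)
  (HR : forall j, (j < K)%nat -> 0 < Rad j)
  (Hdisj : forall i j, (i < K)%nat -> (j < K)%nat -> i <> j ->
             Rad i + Rad j < pdist (c i) (c j))
  (HzD : forall l j, (l < n)%nat -> (j < K)%nat -> Rad j < pdist (z l) (c j)) :
  (exists B : nat -> nat -> R,
     forall j k, (j < K)%nat -> (k < K)%nat ->
       sumR K (fun m => Amat K j m * B m k) = kron j k /\
       sumR K (fun m => B j m * Amat K m k) = kron j k) /\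
  forall gamma : nat -> R,
    exists Gc : nat -> R,
      solves K n gamma Gam Ginf Gc /\
      (forall Gc', solves K n gamma Gam Ginf Gc' ->
         forall j, (j < K)%nat -> Gc' j = Gc j) /\
      (forall N, (1 <= N)%nat -> forall j, (j < K)%nat ->
         avoids_circle (PsiN K c Rad n z Gam Ginf Gc N) (c j) (Rad j) /\
         circulation (PsiN K c Rad n z Gam Ginf Gc N) (c j) (Rad j) = gamma j).
Proof.
  assert (HK1 : (1 <= K)%nat) by lia.
  split.
  { exists (Ainv K). intros j k Hj Hk. split; [apply Amat_Ainv | apply Ainv_Amat]; assumption. }
  intros gamma. set (b := rhs K n gamma Gam Ginf).
  exists (Asol K b). split; [|split].
  - intros j Hj. exact (Amat_Asol K b j HK1 Hj).
  - intros Gc' HGc'. exact (Amat_solution_unique K b Gc' HK1 HGc').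
  - intros N HN j Hj. split.
    + exact (avoids_circle_PsiN K c Rad HR Hdisj n z Gam Ginf (Asol K b) N j Hj HzD).
    + rewrite (circulation_PsiN K c Rad HR Hdisj), Amat_Asol by assumption.
      unfold b, rhs. field. apply not_0_INR. lia.
Qed.
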